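(* Let $\tau>0$, $\varepsilon\ne0$, $\kappa_{12},\kappa_{34}\in\mathbb R$. The system on $T^*S^3=\{(\gamma,p)\in\mathbb R^8:\langle\gamma,\gamma\rangle=1,\langle\gamma,p\rangle=0\}$ $$\dot\gamma_i=\tfrac{\varepsilon^2}\tau p_i\ (i=1,\dots,4),$$ $$\dot p_1=\tfrac1\tau\kappa_{12}p_2+\mu\gamma_1,\ \dot p_2=-\tfrac1\tau\kappa_{12}p_1+\mu\gamma_2,\ \dot p_3=\tfrac1\tau\kappa_{34}p_4+\mu\gamma_3,\ \dot p_4=-\tfrac1\tau\kappa_{34}p_3+\mu\gamma_4,$$ $$\mu=\frac1\tau\big(\kappa_{12}(p_1\gamma_2-p_2\gamma_1)+\kappa_{34}(p_3\gamma_4-p_4\gamma_3)\big)-\frac{\varepsilon^2}\tau(p_1^2+p_2^2+p_3^2+p_4^2),$$ which is Hamiltonian with Hamiltonian $h=\frac{\varepsilon^2}{2\tau}\sum_{i=1}^4p_i^2$ with respect to the symplectic form $\big(\sum_{i=1}^4dp_i\wedge d\gamma_i+\frac{1}{\varepsilon^2}(\kappa_{12}d\gamma_1\wedge d\gamma_2+\kappa_{34}d\gamma_3\wedge d\gamma_4)\big)|_{T^*S^3}$, is Liouville integrable on $T^*S^3$ with the three first integrals $h$, $\Phi_{12}$, $\Phi_{34}$ in involution, where $$\Phi_{12}=\gamma_1p_2-\gamma_2p_1+\frac{\kappa_{12}}{2\varepsilon^2}(\gamma_1^2+\gamma_2^2),\qquad \Phi_{34}=\gamma_3p_4-\gamm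a_4p_3+\frac{\kappa_{34}}{2\varepsilon^2}(\gamma_3^2+\gamma_4^2).$$
   Context: This is the reduced system of the generalized Demchenko case without twisting in $\mathbb R^4$: a balanced 4-dimensional ball with gyroscope, with modified inertia operator $\tau\,\mathrm{Id}_{so(4)}$, rolling without slipping and twisting over a fixed sphere, with gyroscopic matrix $\kappa=\kappa_{12}\mathbf e_1\wedge\mathbf e_2+\kappa_{34}\mathbf e_3\wedge\mathbf e_4$ and $\varepsilon=b/(b\pm a)$. *)

From Stdlib Require Import Reals.
From Coquelicot Require Import Coquelicot.
Open Scope R_scope.

(* A point of R^8 = (gamma_1..gamma_4, p_1..p_4); also used for vectors. *)
Record P8 := mkP8 {
  g1 : R; g2 : R; g3 : R; g4 : R;
  q1 : R; q2 : R; q3 : R; q4 : R }.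

Definition pshift (x : P8) (t : R) (v : P8) : P8 :=
  mkP8 (g1 x + t * g1 v) (g2 x + t * g2 v) (g3 x + t * g3 v) (g4 x + t * g4 v)
       (q1 x + t * q1 v) (q2 x + t * q2 v) (q3 x + t * q3 v) (q4 x + t * q4 v).

Definition dist2 (x y : P8) : R :=
  (g1 x - g1 y)^2 + (g2 x - g2 y)^2 + (g3 x - g3 y)^2 + (g4 x - g4 y)^2 +
  (q1 x - q1 y)^2 + (q2 x - q2 y)^2 + (q3 x - q3 y)^2 + (q4 x - q4 y)^2.

Definition zeroP8 : P8 := mkP8 0 0 0 0 0 0 0 0.

Definition inM (x : P8) : Prop :=
  g1 x ^ 2 + g2 x ^ 2 + g3 x ^ 2 + g4 x ^ 2 = 1 /\
  g1 x * q1 x + g2 x * q2 x + g3 x * q3 x + g4 x * q4 x = 0.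

(* tangent space T_x(T^*S^3) inside R^8 (kernel of the differentials of the constraints) *)
Definition tangent (x v : P8) : Prop :=
  g1 x * g1 v + g2 x * g2 v + g3 x * g3 v + g4 x * g4 v = 0 /\
  (g1 x * q1 v + g2 x * q2 v + g3 x * q3 v + g4 x * q4 v) +
  (q1 x * g1 v + q2 x * g2 v + q3 x * g3 v + q4 x * g4 v) = 0.

(* the 2-form  sum_i dp_i /\ dgamma_i + (1/eps^2)(k12 dg1/\dg2 + k34 dg3/\dg4),
   with (a /\ b)(u,v) = a(u) b(v) - a(v) b(u); constant coefficients on R^8 *)
Definition omega (eps k12 k34 : R) (u v : P8) : R :=
  (q1 u * g1 v - q1 v * g1 u) + (q2 u * g2 v - q2 v * g2 u) +
  (q3 u * g3 v - q3 v * g3 u) + (q4 u * g4 v - q4 v * g4 u) +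
  / (eps ^ 2) * (k12 * (g1 u * g2 v - g1 v * g2 u) + k34 * (g3 u * g4 v - g3 v * g4 u)).

Definition dd (f : P8 -> R) (x v : P8) : R :=
  Derive (fun t => f (pshift x t v)) 0.

Definition nondeg (eps k12 k34 : R) (x : P8) : Prop :=
  forall u, tangent x u -> (forall v, tangent x v -> omega eps k12 k34 u v = 0) -> u = zeroP8.

(* X is the Hamiltonian vector of f at x for the restricted form:
   X tangent and  i_X omega = - df  on the tangent space
   (so that gamma' = dH/dp, p' = -dH/dgamma in the canonical case) *)
Definition ham_vec (eps k12 k34 : R) (f : P8 -> R) (x X : P8) : Prop :=
  tangent x X /\ forall v, tangent x v -> omega eps k12 k34 X v = - dd f x v.

(* Poisson bracket {f,g}(x) = omega(X_f, X_g) vanishes on T^*S^3 *)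
Definition in_involution (eps k12 k34 : R) (f g : P8 -> R) : Prop :=
  forall x, inM x -> forall Xf Xg, ham_vec eps k12 k34 f x Xf -> ham_vec eps k12 k34 g x Xg ->
    omega eps k12 k34 Xf Xg = 0.

Definition first_integral (X : P8 -> P8) (F : P8 -> R) : Prop :=
  forall x, inM x -> dd F x (X x) = 0.

Definition indep3 (f g k : P8 -> R) (x : P8) : Prop :=
  forall a b c, (forall v, tangent x v -> a * dd f x v + b * dd g x v + c * dd k x v = 0) ->
    a = 0 /\ b = 0 /\ c = 0.

Definition open_dense_in_M (U : P8 -> Prop) : Prop :=
  (forall x, U x -> inM x) /\
  (forall x, U x -> exists e, 0 < e /\ forall y, inM y -> dist2 x y < e ^ 2 -> U y) /\
  (forall x, inM x -> forall e, 0 < e -> exists y, U y /\ dist2 x y < e ^ 2).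

Definition liouville_integrable (eps k12 k34 : R) (X : P8 -> P8) (f g k : P8 -> R) : Prop :=
  (forall x, inM x -> nondeg eps k12 k34 x) /\
  first_integral X f /\ first_integral X g /\ first_integral X k /\
  in_involution eps k12 k34 f g /\ in_involution eps k12 k34 f k /\
  in_involution eps k12 k34 g k /\
  exists U, open_dense_in_M U /\ forall x, U x -> indep3 f g k x.

Definition mu (tau eps k12 k34 : R) (x : P8) : R :=
  / tau * (k12 * (q1 x * g2 x - q2 x * g1 x) + k34 * (q3 x * g4 x - q4 x * g3 x))
  - eps ^ 2 / tau * (q1 x ^ 2 + q2 x ^ 2 + q3 x ^ 2 + q4 x ^ 2).

Definition sysX (tau eps k12 k34 : R) (x : P8) : P8 :=
  let m := mu tau eps k12 k34 x in
  mkP8 (eps ^ 2 / tau * q1 x) (eps ^ 2 / tau * q2 x)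
       (eps ^ 2 / tau * q3 x) (eps ^ 2 / tau * q4 x)
       (/ tau * k12 * q2 x + m * g1 x) (- (/ tau * k12 * q1 x) + m * g2 x)
       (/ tau * k34 * q4 x + m * g3 x) (- (/ tau * k34 * q3 x) + m * g4 x).

Definition hamH (tau eps : R) (x : P8) : R :=
  eps ^ 2 / (2 * tau) * (q1 x ^ 2 + q2 x ^ 2 + q3 x ^ 2 + q4 x ^ 2).

Definition Phi12 (eps k12 : R) (x : P8) : R :=
  g1 x * q2 x - g2 x * q1 x + k12 / (2 * eps ^ 2) * (g1 x ^ 2 + g2 x ^ 2).

Definition Phi34 (eps k34 : R) (x : P8) : R :=
  g3 x * q4 x - g4 x * q3 x + k34 / (2 * eps ^ 2) * (g3 x ^ 2 + g4 x ^ 2).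

From Stdlib Require Import Reals Lra Psatz.
From Coquelicot Require Import Coquelicot.
Open Scope R_scope.

(* The restricted form is nondegenerate, as one sees by pairing with explicit tangent
   vectors. The multiplier mu is exactly what keeps the vector field tangent to T^*S^3,
   and i_X omega = -dh is then a direct computation. Phi12 generates the simultaneous
   rotation of (gamma_1, gamma_2) and (p_1, p_2); h and Phi34 are invariant under it, so
   every bracket {f, g} = dg(X_f) vanishes. The three differentials are independent
   wherever gamma_1 p_1 + gamma_2 p_2 <> 0. This set is open by continuity and dense: a
   small rotation of gamma makes both gamma-planes nonzero, and a small tangent shift of
   p then makes gamma_1 p_1 + gamma_2 p_2 nonzero. *)

Ltac simpl_coords := cbn [g1 g2 g3 g4 q1 q2 q3 q4] in *.

Definition gsq12 (x : P8) : R := g1 x ^ 2 + g2 x ^ 2.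
Definition gsq34 (x : P8) : R := g3 x ^ 2 + g4 x ^ 2.
Definition mom12 (x : P8) : R := g1 x * q1 x + g2 x * q2 x.

Lemma dd_hamH tau eps x v : dd (hamH tau eps) x v =
  eps ^ 2 / tau * (q1 x * q1 v + q2 x * q2 v + q3 x * q3 v + q4 x * q4 v).
Proof.
  unfold dd; apply is_derive_unique; destruct x, v; unfold hamH, pshift; simpl.
  auto_derive; [trivial|].
  unfold Rdiv; rewrite Rinv_mult; set (itau := / tau); field.
Qed.

Lemma dd_Phi12 eps k12 x v : dd (Phi12 eps k12) x v =
  g1 v * q2 x + g1 x * q2 v - g2 v * q1 x - g2 x * q1 v
  + k12 / eps ^ 2 * (g1 x * g1 v + g2 x * g2 v).
Proof.
  unfold dd; apply is_derive_unique; destruct x, v; unfold Phi12, pshift; simpl.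
  auto_derive; [trivial|].
  unfold Rdiv; rewrite Rinv_mult; set (ieps := / (eps * (eps * 1))); field.
Qed.

Lemma dd_Phi34 eps k34 x v : dd (Phi34 eps k34) x v =
  g3 v * q4 x + g3 x * q4 v - g4 v * q3 x - g4 x * q3 v
  + k34 / eps ^ 2 * (g3 x * g3 v + g4 x * g4 v).
Proof.
  unfold dd; apply is_derive_unique; destruct x, v; unfold Phi34, pshift; simpl.
  auto_derive; [trivial|].
  unfold Rdiv; rewrite Rinv_mult; set (ieps := / (eps * (eps * 1))); field.
Qed.

Lemma omega_antisym eps k12 k34 u v : omega eps k12 k34 u v = - omega eps k12 k34 v u.
Proof. unfold omega; ring. Qed.

(* Pairing u with the tangent vectors (0, p_u) and (v_p, -<p,v_p> gamma) isolates
   |gamma_u|^2 and then |v_p|^2. *)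
Lemma nondeg_inM eps k12 k34 x : inM x -> nondeg eps k12 k34 x.
Proof.
  intros [Hsph Hort] u [Tg Tp] Hu.
  destruct x as [a1 a2 a3 a4 b1 b2 b3 b4], u as [c1 c2 c3 c4 d1 d2 d3 d4]; simpl_coords.
  assert (Hc : - (c1 ^ 2 + c2 ^ 2 + c3 ^ 2 + c4 ^ 2) = 0).
  { specialize (Hu (mkP8 0 0 0 0 c1 c2 c3 c4)).
    unfold tangent, omega in Hu; simpl_coords.
    rewrite <- Hu by (split; lra); ring. }
  assert (c1 = 0 /\ c2 = 0 /\ c3 = 0 /\ c4 = 0) as (-> & -> & -> & ->) by (repeat split; nra).
  set (z := b1 * d1 + b2 * d2 + b3 * d3 + b4 * d4).
  specialize (Hu (mkP8 d1 d2 d3 d4 (- z * a1) (- z * a2) (- z * a3) (- z * a4))).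
  unfold tangent, omega in Hu; simpl_coords.
  assert (Hd : d1 ^ 2 + d2 ^ 2 + d3 ^ 2 + d4 ^ 2 = 0).
  { rewrite <- Hu; [ring|]. split; [lra|].
    transitivity (z * (1 - (a1 ^ 2 + a2 ^ 2 + a3 ^ 2 + a4 ^ 2))); [unfold z; ring|].
    rewrite Hsph; ring. }
  unfold zeroP8; f_equal; nra.
Qed.

Lemma in_involution_of_ham_vec eps k12 k34 f g (Z : P8 -> P8) :
  (forall x, inM x -> ham_vec eps k12 k34 f x (Z x)) ->
  (forall x, inM x -> dd g x (Z x) = 0) ->
  in_involution eps k12 k34 f g.
Proof.
  intros HZ Hg x Hx Xf Xg [Tf Hf] [Tg HXg].
  destruct (HZ x Hx) as [TZ HZx].
  rewrite (Hf Xg Tg), <- (HZx Xg Tg), omega_antisym, (HXg _ TZ), Hg by exact Hx.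
  ring.
Qed.

Definition rot12 (x : P8) : P8 := mkP8 (- g2 x) (g1 x) 0 0 (- q2 x) (q1 x) 0 0.

Lemma ham_vec_Phi12 eps k12 k34 x :
  eps <> 0 -> ham_vec eps k12 k34 (Phi12 eps k12) x (rot12 x).
Proof.
  intros Heps; destruct x; unfold ham_vec, tangent, rot12; simpl_coords.
  split; [split; ring|].
  intros v _; rewrite dd_Phi12; destruct v; unfold omega; simpl_coords.
  field; exact Heps.
Qed.

Lemma dd_Phi34_rot12 eps k34 x : dd (Phi34 eps k34) x (rot12 x) = 0.
Proof. rewrite dd_Phi34; unfold rot12; simpl_coords; ring. Qed.

Section DemchenkoSystem.

Variables tau eps k12 k34 : R.
Hypothesis tau_pos : 0 < tau.
Hypothesis eps_neq0 : eps <> 0.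

Let X := sysX tau eps k12 k34.

Lemma ham_vec_sysX x : inM x -> ham_vec eps k12 k34 (hamH tau eps) x (X x).
Proof.
  intros [Hsph Hort]; destruct x as [a1 a2 a3 a4 b1 b2 b3 b4].
  unfold X, ham_vec, tangent, sysX; simpl_coords.
  set (m := mu tau eps k12 k34 _).
  split; [split|].
  - transitivity (eps ^ 2 / tau * (a1 * b1 + a2 * b2 + a3 * b3 + a4 * b4)); [field; lra|].
    rewrite Hort; ring.
  - transitivity (m * (a1 ^ 2 + a2 ^ 2 + a3 ^ 2 + a4 ^ 2 - 1)).
    + unfold m, mu; simpl_coords; field; lra.
    + rewrite Hsph; ring.
  - intros [c1 c2 c3 c4 d1 d2 d3 d4] [Tg _]; rewrite dd_hamH; unfold omega; simpl_coords.
    transitivity (m * (a1 * c1 + a2 * c2 + a3 * c3 + a4 * c4)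
      - eps ^ 2 / tau * (b1 * d1 + b2 * d2 + b3 * d3 + b4 * d4)); [field; lra|].
    rewrite Tg; ring.
Qed.

Lemma first_integral_hamH : first_integral X (hamH tau eps).
Proof.
  intros x [_ Hort]; rewrite dd_hamH; destruct x as [a1 a2 a3 a4 b1 b2 b3 b4].
  unfold X, sysX; simpl_coords; set (m := mu tau eps k12 k34 _).
  transitivity (eps ^ 2 / tau * m * (a1 * b1 + a2 * b2 + a3 * b3 + a4 * b4)); [ring|].
  rewrite Hort; ring.
Qed.

Lemma first_integral_Phi12 : first_integral X (Phi12 eps k12).
Proof.
  intros x _; rewrite dd_Phi12; destruct x.
  unfold X, sysX, mu; simpl_coords; field; lra.
Qed.

Lemma first_integral_Phi34 : first_integral X (Phi34 eps k34).
Proof.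
  intros x _; rewrite dd_Phi34; destruct x.
  unfold X, sysX, mu; simpl_coords; field; lra.
Qed.

(* Test on the tangent vectors (0, s g12, -r g34), (0, J g12, 0), (0, 0, J g34), where
   r = gsq12 x, s = gsq34 x and J is the quarter turn in each plane. *)
Lemma indep3_mom12_neq0 x : inM x -> mom12 x <> 0 ->
  indep3 (hamH tau eps) (Phi12 eps k12) (Phi34 eps k34) x.
Proof.
  intros [Hsph Hort] Hmom a b c Hdep.
  destruct x as [a1 a2 a3 a4 b1 b2 b3 b4]; unfold mom12 in Hmom; simpl_coords.
  set (r := a1 ^ 2 + a2 ^ 2); set (s := a3 ^ 2 + a4 ^ 2).
  assert (Hr : 0 < r).
  { unfold r; destruct (Req_dec a1 0), (Req_dec a2 0); subst; nra. }
  assert (Hs : 0 < s).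
  { unfold s; destruct (Req_dec a3 0), (Req_dec a4 0); subst; nra. }
  pose proof (Hdep (mkP8 0 0 0 0 (s * a1) (s * a2) (- r * a3) (- r * a4))) as E1.
  pose proof (Hdep (mkP8 0 0 0 0 (- a2) a1 0 0)) as E2.
  pose proof (Hdep (mkP8 0 0 0 0 0 0 (- a4) a3)) as E3.
  rewrite !dd_hamH, !dd_Phi12, !dd_Phi34 in E1, E2, E3; unfold tangent in *; simpl_coords.
  assert (Ha : a * (eps ^ 2 / tau) * (a1 * b1 + a2 * b2) = 0).
  { assert (Hrs : r + s = 1) by (unfold r, s; lra).
    rewrite <- E1; [|unfold r, s; split; ring].
    transitivity (a * (eps ^ 2 / tau) * ((a1 * b1 + a2 * b2) * (r + s)
      - r * (a1 * b1 + a2 * b2 + a3 * b3 + a4 * b4))); [rewrite Hrs, Hort; ring | ring]. }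
  assert (0 < eps ^ 2 / tau) by (apply Rdiv_lt_0_compat; [apply pow2_gt_0|]; assumption).
  assert (a = 0) as -> by (apply Rmult_integral in Ha as [Ha|]; [nra|contradiction]).
  assert (b * r = 0) by (rewrite <- E2; [unfold r; field; lra | split; ring]).
  assert (c * s = 0) by (rewrite <- E3; [unfold s; field; lra | split; ring]).
  split; [reflexivity | split; nra].
Qed.

End DemchenkoSystem.

Lemma exists_small_pos L d : 0 < L -> 0 < d -> exists t, 0 < t <= 1 / 2 /\ t * L < d.
Proof.
  intros HL Hd; exists (d / (2 * (L + d))).
  assert (Ht : d / (2 * (L + d)) * (2 * (L + d)) = d) by (field; lra).
  set (t := d / (2 * (L + d))) in *.
  assert (0 < t) by (unfold t; apply Rdiv_lt_0_compat; lra).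
  repeat split; nra.
Qed.

Lemma exists_small_sq L e : 0 <= L -> 0 < e -> exists t, 0 < t <= 1 / 2 /\ t ^ 2 * L < e ^ 2.
Proof.
  intros HL He; destruct (exists_small_pos (1 + L) e) as (t & Ht & HtL); [lra | exact He |].
  exists t; split; [exact Ht|].
  assert (t * (1 + L) * (t * (1 + L)) < e * e) by (apply Rmult_le_0_lt_compat; nra).
  nra.
Qed.

Lemma Rabs_lt_of_sq_lt a e : 0 < e -> a ^ 2 < e ^ 2 -> Rabs a < e.
Proof.
  intros He Ha; rewrite <- (Rabs_pos_eq e) by lra.
  apply Rsqr_lt_abs_0; unfold Rsqr; lra.
Qed.

Lemma Rabs_mul_sub_le a a' b b' e :
  Rabs (a' - a) <= e -> Rabs (b' - b) <= e -> e <= 1 ->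
  Rabs (a' * b' - a * b) <= e * (Rabs a + Rabs b + 1).
Proof.
  intros Ha Hb He.
  replace (a' * b' - a * b) with (a * (b' - b) + (a' - a) * b + (a' - a) * (b' - b)) by ring.
  pose proof (Rabs_pos a); pose proof (Rabs_pos b).
  pose proof (Rabs_pos (a' - a)); pose proof (Rabs_pos (b' - b)).
  eapply Rle_trans; [apply Rabs_triang|].
  eapply Rle_trans; [apply Rplus_le_compat_r, Rabs_triang|].
  rewrite !Rabs_mult; nra.
Qed.

Lemma mom12_locally_neq0 x : mom12 x <> 0 ->
  exists e, 0 < e /\ forall y, dist2 x y < e ^ 2 -> mom12 y <> 0.
Proof.
  intros Hmom.
  set (K := Rabs (g1 x) + Rabs (q1 x) + Rabs (g2 x) + Rabs (q2 x) + 2).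
  assert (HK : 0 < K) by (unfold K; pose proof (Rabs_pos (g1 x)); pose proof (Rabs_pos (q1 x));
    pose proof (Rabs_pos (g2 x)); pose proof (Rabs_pos (q2 x)); lra).
  destruct (exists_small_pos K (Rabs (mom12 x))) as (e & [He0 He1] & HeK);
    [exact HK | apply Rabs_pos_lt, Hmom |].
  exists e; split; [lra|]; intros y Hdist Hmomy.
  unfold K, mom12 in *; destruct x as [a1 a2 a3 a4 b1 b2 b3 b4], y as [c1 c2 c3 c4 d1 d2 d3 d4].
  unfold dist2 in Hdist; simpl_coords.
  pose proof (pow2_ge_0 (a1 - c1)); pose proof (pow2_ge_0 (a2 - c2));
  pose proof (pow2_ge_0 (a3 - c3)); pose proof (pow2_ge_0 (a4 - c4));
  pose proof (pow2_ge_0 (b1 - d1)); pose proof (pow2_ge_0 (b2 - d2));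
  pose proof (pow2_ge_0 (b3 - d3)); pose proof (pow2_ge_0 (b4 - d4)).
  assert (Hc1 : Rabs (c1 - a1) < e) by (apply Rabs_lt_of_sq_lt; nra).
  assert (Hc2 : Rabs (c2 - a2) < e) by (apply Rabs_lt_of_sq_lt; nra).
  assert (Hd1 : Rabs (d1 - b1) < e) by (apply Rabs_lt_of_sq_lt; nra).
  assert (Hd2 : Rabs (d2 - b2) < e) by (apply Rabs_lt_of_sq_lt; nra).
  pose proof (Rabs_mul_sub_le a1 c1 b1 d1 e ltac:(lra) ltac:(lra) ltac:(lra)).
  pose proof (Rabs_mul_sub_le a2 c2 b2 d2 e ltac:(lra) ltac:(lra) ltac:(lra)).
  assert (Rabs (a1 * b1 + a2 * b2) <= Rabs (c1 * d1 - a1 * b1) + Rabs (c2 * d2 - a2 * b2)).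
  { replace (a1 * b1 + a2 * b2) with (- ((c1 * d1 - a1 * b1) + (c2 * d2 - a2 * b2))) by lra.
    rewrite Rabs_Ropp; apply Rabs_triang. }
  lra.
Qed.

Lemma dist2_refl x : dist2 x x = 0.
Proof. unfold dist2; ring. Qed.

Lemma dist2_triangle2 x y z : dist2 x z <= 2 * dist2 x y + 2 * dist2 y z.
Proof.
  assert (Hsq : forall a b c, (a - c) ^ 2 <= 2 * (a - b) ^ 2 + 2 * (b - c) ^ 2)
    by (intros a b c; pose proof (pow2_ge_0 (a - 2 * b + c)); nra).
  unfold dist2.
  pose proof (Hsq (g1 x) (g1 y) (g1 z)); pose proof (Hsq (g2 x) (g2 y) (g2 z));
  pose proof (Hsq (g3 x) (g3 y) (g3 z)); pose proof (Hsq (g4 x) (g4 y) (g4 z));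
  pose proof (Hsq (q1 x) (q1 y) (q1 z)); pose proof (Hsq (q2 x) (q2 y) (q2 z));
  pose proof (Hsq (q3 x) (q3 y) (q3 z)); pose proof (Hsq (q4 x) (q4 y) (q4 z)).
  lra.
Qed.

(* Shifting p along the tangent direction (s g12, -r g34) changes mom12 at rate r s. *)
Lemma mom12_neq0_near x e : inM x -> 0 < gsq12 x -> 0 < gsq34 x -> 0 < e ->
  exists y, inM y /\ mom12 y <> 0 /\ dist2 x y < e ^ 2.
Proof.
  intros Hx Hr Hs He.
  destruct (Req_dec (mom12 x) 0) as [Hmom|Hmom].
  2:{ exists x; rewrite dist2_refl; split; [exact Hx | split; [exact Hmom | nra]]. }
  destruct Hx as [Hsph Hort]; unfold gsq12, gsq34, mom12 in *.
  destruct x as [a1 a2 a3 a4 b1 b2 b3 b4]; simpl_coords.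
  set (r := a1 ^ 2 + a2 ^ 2) in *; set (s := a3 ^ 2 + a4 ^ 2) in *.
  set (v := mkP8 0 0 0 0 (s * a1) (s * a2) (- r * a3) (- r * a4)).
  set (W := (s * a1) ^ 2 + (s * a2) ^ 2 + (r * a3) ^ 2 + (r * a4) ^ 2).
  destruct (exists_small_sq W e) as (t & [Ht0 _] & HtW); [unfold W; nra | exact He |].
  exists (pshift (mkP8 a1 a2 a3 a4 b1 b2 b3 b4) t v).
  unfold inM, mom12, dist2, pshift, v; simpl_coords; repeat split.
  - rewrite <- Hsph; unfold r; ring.
  - transitivity (a1 * b1 + a2 * b2 + a3 * b3 + a4 * b4 + t * (s * r - r * s));
      [unfold r, s; ring | rewrite Hort; ring].
  - replace (_ * _ + _ * _) with (a1 * b1 + a2 * b2 + t * s * r) by (unfold r; ring).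
    assert (0 < t * s) by (apply Rmult_lt_0_compat; assumption).
    rewrite Hmom; apply Rgt_not_eq; nra.
  - replace (_ + _) with (t ^ 2 * W) by (unfold W; ring); exact HtW.
Qed.

Lemma pythagorean_near_1 t : 0 < t <= 1 / 2 ->
  exists a c, a ^ 2 + c ^ 2 = 1 /\ 0 < a <= 2 * t /\ 1 / 2 <= c /\ 0 <= 1 - c <= t.
Proof.
  intros Ht; exists (2 * t / (1 + t ^ 2)), ((1 - t ^ 2) / (1 + t ^ 2)).
  assert (HD : 0 < 1 + t ^ 2) by nra.
  assert (Ha : 2 * t / (1 + t ^ 2) * (1 + t ^ 2) = 2 * t) by (field; lra).
  assert (Hc : (1 - t ^ 2) / (1 + t ^ 2) * (1 + t ^ 2) = 1 - t ^ 2) by (field; lra).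
  split; [field; lra|].
  set (a := 2 * t / (1 + t ^ 2)) in *; set (c := (1 - t ^ 2) / (1 + t ^ 2)) in *.
  repeat split; nra.
Qed.

(* Tilt gamma out of the 34-plane by a small Pythagorean rotation, correcting p_34
   along gamma_34 to stay in T^*S^3. *)
Lemma gsq_pos_near_of_gsq12_eq0 x e : inM x -> gsq12 x = 0 -> 0 < e ->
  exists y, inM y /\ 0 < gsq12 y /\ 0 < gsq34 y /\ dist2 x y < e ^ 2.
Proof.
  intros [Hsph Hort] H12 He; unfold gsq12, gsq34 in *.
  destruct x as [a1 a2 a3 a4 b1 b2 b3 b4]; simpl_coords.
  assert (a1 = 0 /\ a2 = 0) as [-> ->] by (split; nra).
  destruct (exists_small_sq (5 + 16 * b1 ^ 2) e) as (t & Ht & HtL); [nra | exact He |].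
  destruct (pythagorean_near_1 t Ht) as (a & c & Hac & [Ha0 Ha1] & Hc & [H1c0 H1c1]).
  destruct Ht as [Ht0 Ht1].
  set (d := - (a * b1 / c)).
  assert (Hdc : d * c = - (a * b1)) by (unfold d; field; lra).
  exists (mkP8 a 0 (c * a3) (c * a4) b1 b2 (b3 + d * a3) (b4 + d * a4)).
  unfold inM, dist2; simpl_coords; repeat split.
  - transitivity (a ^ 2 + c ^ 2 * (0 ^ 2 + 0 ^ 2 + a3 ^ 2 + a4 ^ 2)); [ring|].
    rewrite Hsph; lra.
  - transitivity (a * b1 + c * (0 * b1 + 0 * b2 + a3 * b3 + a4 * b4)
      + d * c * (0 ^ 2 + 0 ^ 2 + a3 ^ 2 + a4 ^ 2)); [ring|].
    rewrite Hsph, Hort, Hdc; ring.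
  - nra.
  - replace ((c * a3) ^ 2 + (c * a4) ^ 2) with (c ^ 2 * (0 ^ 2 + 0 ^ 2 + a3 ^ 2 + a4 ^ 2))
      by ring.
    rewrite Hsph; nra.
  - replace (_ + _) with (a ^ 2 + (1 - c) ^ 2 * (0 ^ 2 + 0 ^ 2 + a3 ^ 2 + a4 ^ 2)
      + d ^ 2 * (0 ^ 2 + 0 ^ 2 + a3 ^ 2 + a4 ^ 2)) by ring.
    rewrite Hsph.
    assert (a ^ 2 <= 4 * t ^ 2) by nra.
    assert ((1 - c) ^ 2 <= t ^ 2) by nra.
    assert (1 <= 4 * c ^ 2) by nra.
    assert (d ^ 2 <= 4 * (a * b1) ^ 2).
    { assert (Hsq : (d * c) ^ 2 = (a * b1) ^ 2) by (rewrite Hdc; ring).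
      rewrite <- Hsq; pose proof (pow2_ge_0 d); nra. }
    assert (d ^ 2 <= 16 * t ^ 2 * b1 ^ 2) by nra.
    nra.
Qed.

Definition swap_planes (x : P8) : P8 :=
  mkP8 (g3 x) (g4 x) (g1 x) (g2 x) (q3 x) (q4 x) (q1 x) (q2 x).

Lemma inM_swap_planes x : inM x -> inM (swap_planes x).
Proof. destruct x; unfold inM, swap_planes; simpl_coords; intros [H1 H2]; split; lra. Qed.

Lemma dist2_swap_planes x y : dist2 x (swap_planes y) = dist2 (swap_planes x) y.
Proof. unfold dist2, swap_planes; simpl_coords; ring. Qed.

Lemma gsq_pos_near x e : inM x -> 0 < e ->
  exists y, inM y /\ 0 < gsq12 y /\ 0 < gsq34 y /\ dist2 x y < e ^ 2.
Proof.
  intros Hx He.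
  assert (H12 : 0 <= gsq12 x) by (unfold gsq12; nra).
  assert (H34 : 0 <= gsq34 x) by (unfold gsq34; nra).
  destruct (Rle_lt_or_eq_dec _ _ H12) as [Hr|Hr];
    [destruct (Rle_lt_or_eq_dec _ _ H34) as [Hs|Hs]|].
  - exists x; rewrite dist2_refl; split; [exact Hx | repeat split; [exact Hr | exact Hs | nra]].
  - destruct (gsq_pos_near_of_gsq12_eq0 (swap_planes x) e) as (y & Hy & Hy12 & Hy34 & Hd);
      [apply inM_swap_planes, Hx | symmetry; exact Hs | exact He |].
    exists (swap_planes y); rewrite dist2_swap_planes.
    split; [apply inM_swap_planes, Hy | repeat split; [exact Hy34 | exact Hy12 | exact Hd]].
  - apply gsq_pos_near_of_gsq12_eq0; [exact Hx | symmetry; exact Hr | exact He].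
Qed.

Lemma open_dense_mom12_neq0 : open_dense_in_M (fun x => inM x /\ mom12 x <> 0).
Proof.
  split; [|split].
  - intros x [Hx _]; exact Hx.
  - intros x [_ Hmom]; destruct (mom12_locally_neq0 x Hmom) as (e & He & Hnear).
    exists e; split; [exact He|]; intros y Hy Hd; split; [exact Hy | apply Hnear, Hd].
  - intros x Hx e He.
    destruct (gsq_pos_near x (e / 2)) as (y & Hy & Hr & Hs & Hxy); [exact Hx | lra |].
    destruct (mom12_neq0_near y (e / 2)) as (z & Hz & Hmom & Hyz); [exact Hy | exact Hr | exact Hs | lra |].
    exists z; split; [split; assumption|].
    pose proof (dist2_triangle2 x y z); nra.
Qed.

Theorem theorem9p5 (tau eps k12 k34 : R) :
  0 < tau -> eps <> 0 ->
  (* the system is Hamiltonian with Hamiltonian h w.r.t. the restricted form *)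
  (forall x, inM x -> ham_vec eps k12 k34 (hamH tau eps) x (sysX tau eps k12 k34 x)) /\
  (* and Liouville integrable with first integrals h, Phi12, Phi34 *)
  liouville_integrable eps k12 k34 (sysX tau eps k12 k34)
    (hamH tau eps) (Phi12 eps k12) (Phi34 eps k34).
Proof.
  intros Htau Heps.
  pose proof (ham_vec_sysX tau eps k12 k34 Htau Heps) as Hham.
  split; [exact Hham|].
  repeat split.
  - intros x Hx; exact (nondeg_inM eps k12 k34 x Hx).
  - exact (first_integral_hamH tau eps k12 k34).
  - exact (first_integral_Phi12 tau eps k12 k34 Htau Heps).
  - exact (first_integral_Phi34 tau eps k12 k34 Htau Heps).
  - exact (in_involution_of_ham_vec _ _ _ _ _ _ Hham (first_integral_Phi12 tau eps k12 k34 Htau Heps)).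
  - exact (in_involution_of_ham_vec _ _ _ _ _ _ Hham (first_integral_Phi34 tau eps k12 k34 Htau Heps)).
  - apply (in_involution_of_ham_vec _ _ _ _ _ rot12).
    + intros x _; exact (ham_vec_Phi12 eps k12 k34 x Heps).
    + intros x _; exact (dd_Phi34_rot12 eps k34 x).
  - exists (fun x => inM x /\ mom12 x <> 0); split; [exact open_dense_mom12_neq0|].
    intros x [Hx Hmom]; exact (indep3_mom12_neq0 tau eps k12 k34 Htau Heps x Hx Hmom).
Qed.
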